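(* Let $(\mathcal{P},\cdot)$ be a finite-dimensional complex admissible Poisson algebra such that $\mathfrak{g}_{\mathcal{P}}$ is a simple complex Lie algebra. Then $U\bullet V=0$ for all $U,V\in\mathcal{P}$; equivalently $U\cdot V=\{U,V\}$ for all $U,V$, i.e. $\mathcal{A}_{\mathcal{P}}^2=\{0\}$.
   Context: Associator: $A(X,Y,Z)=(X\cdot Y)\cdot Z-X\cdot(Y\cdot Z)$. An admissible Poisson algebra is a vector space $\mathcal{P}$ with a bilinear product $\cdot$ satisfying $3A(X,Y,Z)=(X\cdot Z)\cdot Y+(Y\cdot Z)\cdot X-(Y\cdot X)\cdot Z-(Z\cdot X)\cdot Y$ for all $X,Y,Z$. $\{X,Y\}=\frac12(X\cdot Y-Y\cdot X)$, $X\bullet Y=\frac12(X\cdot Y+Y\cdot X)$; $\mathfrak{g}_{\mathcal{P}}=(\mathcal{P},\{\,,\,\})$, $\mathcal{A}_{\mathcal{P}}=(\mathcal{P},\bullet)$; these form a Poisson algebra (Lie bracket, commutative associative product, Leibniz rule $\{X\bullet Y,Z\}=X\bullet\{Y,Z\}+\{X,Z\}\bullet Y$). *)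

From HB Require Import structures.
From mathcomp Require Import all_boot all_order all_algebra.
From mathcomp Require Import complex.
From mathcomp Require Import reals.
Set Implicit Arguments. Unset Strict Implicit. Unset Printing Implicit Defensive.
Import Order.TTheory GRing.Theory Num.Theory.
Local Open Scope ring_scope.

Definition bilinear_prod (K : fieldType) (V : vectType K) (mul : V -> V -> V) :=
  (forall x, linear (mul x)) /\ (forall y, linear (fun x => mul x y)).

Definition assoc (K : fieldType) (V : vectType K) (mul : V -> V -> V) (x y z : V) :=
  mul (mul x y) z - mul x (mul y z).

Definition admissible_identity (K : fieldType) (V : vectType K) (mul : V -> V -> V) :=
  forall x y z : V,
    assoc mul x y z *+ 3 =
      mul (mul x z) y + mul (mul y z) x - mul (mul y x) z - mul (mul z x) y.

Definition admissible_Poisson (K : fieldType) (V : vectType K) (mul : V -> V -> V) :=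
  bilinear_prod mul /\ admissible_identity mul.

Definition pbracket (K : fieldType) (V : vectType K) (mul : V -> V -> V) (x y : V) : V :=
  2^-1 *: (mul x y - mul y x).
Definition pdot (K : fieldType) (V : vectType K) (mul : V -> V -> V) (x y : V) : V :=
  2^-1 *: (mul x y + mul y x).

Definition is_lie_algebra (K : fieldType) (V : vectType K) (br : V -> V -> V) :=
  [/\ forall x, linear (br x), forall y, linear (fun x => br x y),
      forall x, br x x = 0
    & forall x y z, br x (br y z) + br y (br z x) + br z (br x y) = 0].

Definition lie_ideal (K : fieldType) (V : vectType K) (br : V -> V -> V)
  (I : {vspace V}) := forall x y, y \in I -> br x y \in I.

Definition simple_lie_algebra (K : fieldType) (V : vectType K) (br : V -> V -> V) :=
  [/\ is_lie_algebra br,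
      exists x y, br x y != 0
    & forall I : {vspace V}, lie_ideal br I -> I = 0%VS \/ I = fullv].

From HB Require Import structures.
From mathcomp Require Import all_boot all_order all_algebra.
From mathcomp Require Import complex.
From mathcomp Require Import reals.
From mathcomp Require Import ring.
Set Implicit Arguments. Unset Strict Implicit. Unset Printing Implicit Defensive.
Import Order.TTheory GRing.Theory Num.Theory.
Local Open Scope ring_scope.

(* The admissible identity makes [•] commutative associative and the bracket
   act on it by derivations, so the span of all products [A•A] is a Lie ideal.
   If it is 0 we are done.  Otherwise [A•A = A], and the determinant trick
   (Nakayama) in the unitization of the finite-dimensional commutative algebra
   [A] produces a unit [e].  Leibniz' rule then gives [{e, V} = 0], so [K e] is a
   Lie ideal: it cannot be [V] since [V] is not abelian, and [e = 0] forces
   [A = 0]. *)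

Lemma coord_vbasis_inj (K : fieldType) (V : vectType K) (u v : V) :
  (forall i, coord (vbasis fullv) i u = coord (vbasis fullv) i v) -> u = v.
Proof.
move=> eq_uv; rewrite (coord_vbasis (memvf u)) (coord_vbasis (memvf v)).
by apply: eq_bigr => i _; rewrite eq_uv.
Qed.

(* Identities between vectors are checked coordinatewise, as ring identities. *)
Ltac coord_ring_goal := apply: coord_vbasis_inj => i;
  rewrite ?(linearD, linearB, linearN, linearZ, linear0) /=.

Section Bilinear.
Variables (K : fieldType) (V : vectType K) (m : V -> V -> V).
Hypothesis m_bil : bilinear_prod m.

Lemma bilinDl x u v : m (u + v) x = m u x + m v x.
Proof. by have := m_bil.2 x 1 u v; rewrite !scale1r. Qed.
Lemma bilinDr x u v : m x (u + v) = m x u + m x v.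
Proof. by have := m_bil.1 x 1 u v; rewrite !scale1r. Qed.
Lemma bilin0l x : m 0 x = 0.
Proof. by apply: (@addrI _ (m 0 x)); rewrite -bilinDl !addr0. Qed.
Lemma bilin0r x : m x 0 = 0.
Proof. by apply: (@addrI _ (m x 0)); rewrite -bilinDr !addr0. Qed.
Lemma bilinZl x a u : m (a *: u) x = a *: m u x.
Proof. by have := m_bil.2 x a u 0; rewrite !addr0 bilin0l addr0. Qed.
Lemma bilinZr x a u : m x (a *: u) = a *: m x u.
Proof. by have := m_bil.1 x a u 0; rewrite !addr0 bilin0r addr0. Qed.
Lemma bilinNl x u : m (- u) x = - m u x.
Proof. by rewrite -scaleN1r bilinZl scaleN1r. Qed.
Lemma bilinNr x u : m x (- u) = - m x u.
Proof. by rewrite -scaleN1r bilinZr scaleN1r. Qed.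
Lemma bilinBl x u v : m (u - v) x = m u x - m v x.
Proof. by rewrite bilinDl bilinNl. Qed.
Lemma bilinBr x u v : m x (u - v) = m x u - m x v.
Proof. by rewrite bilinDr bilinNr. Qed.

Lemma bilin_suml (I : Type) (r : seq I) (P : pred I) (F : I -> V) y :
  m (\sum_(i <- r | P i) F i) y = \sum_(i <- r | P i) m (F i) y.
Proof. exact: (big_morph (m^~ y) (bilinDl y) (bilin0l y)). Qed.
Lemma bilin_sumr (I : Type) (r : seq I) (P : pred I) (F : I -> V) x :
  m x (\sum_(i <- r | P i) F i) = \sum_(i <- r | P i) m x (F i).
Proof. exact: (big_morph (m x) (bilinDr x) (bilin0r x)). Qed.

End Bilinear.

Ltac bilin_expand m_bil := rewrite ?(bilinDl m_bil, bilinDr m_bil, bilinBl m_bil,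
  bilinBr m_bil, bilinNl m_bil, bilinNr m_bil, bilinZl m_bil, bilinZr m_bil,
  bilin0l m_bil, bilin0r m_bil).

Lemma lie_anticomm (K : fieldType) (V : vectType K) (br : V -> V -> V) :
  is_lie_algebra br -> forall x y, br x y = - br y x.
Proof.
case=> br_r br_l br_xx _ x y; have br_bil : bilinear_prod br by split.
have := br_xx (x + y); bilin_expand br_bil; rewrite !br_xx add0r addr0.
by move/eqP; rewrite addr_eq0 => /eqP.
Qed.

Section AdmissiblePoisson.
Variables (K : numFieldType) (V : vectType K) (mul : V -> V -> V).
Hypothesis mul_bil : bilinear_prod mul.
Hypothesis mul_adm : admissible_identity mul.

Lemma admissible_mulA x y z : mul x (mul y z) = mul (mul x y) z - 3^-1 *:
  (mul (mul x z) y + mul (mul y z) x - mul (mul y x) z - mul (mul z x) y).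
Proof.
rewrite -mul_adm /assoc -scaler_nat scalerA mulVf ?scale1r ?pnatr_eq0 //.
by rewrite opprB addrC subrK.
Qed.

Lemma pdot_bilinear : bilinear_prod (pdot mul).
Proof.
by rewrite /pdot; split=> x a u v; bilin_expand mul_bil; coord_ring_goal; ring.
Qed.

Lemma pdotC : commutative (pdot mul).
Proof. by move=> x y; rewrite /pdot addrC. Qed.

Lemma pdotA : associative (pdot mul).
Proof.
move=> x y z; rewrite /pdot; bilin_expand mul_bil; rewrite !admissible_mulA.
by coord_ring_goal; field.
Qed.

Lemma pbracket_pdot_leibniz x y z : pbracket mul (pdot mul x y) z =
  pdot mul x (pbracket mul y z) + pdot mul (pbracket mul x z) y.
Proof.
rewrite /pdot /pbracket; bilin_expand mul_bil; rewrite !admissible_mulA.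
by coord_ring_goal; field.
Qed.

End AdmissiblePoisson.

Record comAlg (K : fieldType) (V : vectType K) := ComAlg {
  cmul : V -> V -> V;
  cmul_bilinear : bilinear_prod cmul;
  cmulC : commutative cmul;
  cmulA : associative cmul }.

Definition unitization (K : fieldType) (V : vectType K) (A : comAlg V) : Type :=
  (K * V)%type.

Section Unitization.
Variables (K : fieldType) (V : vectType K) (A : comAlg V).
Local Notation U := (unitization A).

HB.instance Definition _ := GRing.Zmodule.copy U (K * V)%type.

Definition unitization_mul (x y : U) : U :=
  (x.1 * y.1, x.1 *: y.2 + y.1 *: x.2 + cmul A x.2 y.2).
Definition unitization_one : U := (1, 0).

Lemma unitization_mulA : associative unitization_mul.
Proof.
case=> a u [b v] [c w]; rewrite /unitization_mul /=; bilin_expand (cmul_bilinear A).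
by rewrite !cmulA; congr pair; [ring | coord_ring_goal; ring].
Qed.

Lemma unitization_mulC : commutative unitization_mul.
Proof.
case=> a u [b v]; rewrite /unitization_mul /= (cmulC A u v).
by congr pair; [ring | coord_ring_goal; ring].
Qed.

Lemma unitization_mul1 : left_id unitization_one unitization_mul.
Proof.
case=> a u; rewrite /unitization_mul /=; bilin_expand (cmul_bilinear A).
by congr pair; [ring | coord_ring_goal; ring].
Qed.

Lemma unitization_mulDl : left_distributive unitization_mul +%R.
Proof.
case=> a u [b v] [c w]; rewrite /unitization_mul /=; bilin_expand (cmul_bilinear A).
by congr pair => /=; [ring | coord_ring_goal; ring].
Qed.

Lemma unitization_one_neq0 : unitization_one != 0.
Proof. by apply/eqP => -[] /eqP; rewrite oner_eq0. Qed.

HB.instance Definition _ := GRing.Zmodule_isComNzRing.Build U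
  unitization_mulA unitization_mulC unitization_mul1 unitization_mulDl
  unitization_one_neq0.

Definition unitization_scalar (x : U) : K := x.1.

Fact unitization_scalar_zmod : zmod_morphism unitization_scalar.
Proof. by case=> a u [b v]. Qed.
HB.instance Definition _ := GRing.isZmodMorphism.Build U K unitization_scalar
  unitization_scalar_zmod.

Fact unitization_scalar_monoid : monoid_morphism unitization_scalar.
Proof. by split => // -[a u] [b v]. Qed.
HB.instance Definition _ := GRing.isMonoidMorphism.Build U K unitization_scalar
  unitization_scalar_monoid.

End Unitization.

Lemma scale_det_1Bmx_fixed (R : comNzRingType) n (C : 'M[R]_n) (w : 'cV[R]_n) :
  C *m w = w -> \det (1%:M - C) *: w = 0.
Proof.
move=> Cw; have Mw : (1%:M - C) *m w = 0 by rewrite mulmxBl mul1mx Cw subrr.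
by rewrite -mul_scalar_mx -mul_adj_mx -mulmxA Mw mulmx0.
Qed.

Section SquareSpan.
Variables (K : fieldType) (V : vectType K) (m : V -> V -> V).
Local Notation n := (\dim (@fullv _ V)).
Local Notation b := (vbasis (@fullv _ V)).

Definition square_span : {vspace V} := <<[seq m x y | x <- b, y <- b]>>%VS.

Hypothesis m_bil : bilinear_prod m.

Lemma mem_vbasis_nth (i : 'I_n) : b`_i \in (b : seq V).
Proof. by apply: mem_nth; rewrite size_tuple. Qed.

Lemma mul_in_square_span u v : m u v \in square_span.
Proof.
rewrite (coord_vbasis (memvf u)) (coord_vbasis (memvf v)) (bilin_suml m_bil).
apply: memv_suml => i _; rewrite (bilin_sumr m_bil); apply: memv_suml => j _.
rewrite (bilinZl m_bil) (bilinZr m_bil); do 2!apply: memvZ.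
by apply: memv_span; apply: allpairs_f; apply: mem_vbasis_nth.
Qed.

Lemma square_span_ind (P : V -> Prop) :
  P 0 -> (forall v w, P v -> P w -> P (v + w)) -> (forall a v, P v -> P (a *: v)) ->
  (forall x y, P (m x y)) -> forall w, w \in square_span -> P w.
Proof.
move=> P0 PD PZ Pm w; rewrite /square_span; set X := [seq _ | x <- _, y <- _] => w_sq.
rewrite [w](@coord_span _ _ _ (in_tuple X) _ w_sq); apply: big_ind => // k _.
have /allpairsP [[p q] [_ _ ->]] : X`_k \in X by apply: mem_nth.
exact: PZ.
Qed.

Lemma square_span_decomp w : w \in square_span ->
  exists f : 'I_n -> V, w = \sum_j m (f j) b`_j.
Proof.
move: w; apply: square_span_ind => [|_ _ [f ->] [g ->]|a _ [f ->]|x y].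
- by exists (fun=> 0); apply/esym/big1 => j _; rewrite (bilin0l m_bil).
- exists (fun j => f j + g j); rewrite -big_split.
  by apply: eq_bigr => j _; rewrite (bilinDl m_bil).
- exists (fun j => a *: f j); rewrite scaler_sumr.
  by apply: eq_bigr => j _; rewrite (bilinZl m_bil).
- exists (fun j => coord b j y *: x).
  rewrite {1}(coord_vbasis (memvf y)) (bilin_sumr m_bil).
  by apply: eq_bigr => j _; rewrite (bilinZl m_bil) (bilinZr m_bil).
Qed.

End SquareSpan.

Section UnitOfIdempotentAlgebra.
Variables (K : fieldType) (V : vectType K) (A : comAlg V).
Local Notation n := (\dim (@fullv _ V)).
Local Notation b := (vbasis (@fullv _ V)).
Local Notation U := (unitization A).

(* Writing [b_i = Σ_j F_ij b_j] as [C w = w] over the unitization, the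
   determinant [δ = det (1 - C)] has scalar part 1 and kills every [b_j],
   so [- δ.2] is a unit of [A]. *)
Lemma square_span_full_unital : square_span (cmul A) = fullv ->
  exists e, forall x, cmul A e x = x.
Proof.
move=> sq_full.
have /fin_all_exists [F bF] : forall i : 'I_n,
    exists f : 'I_n -> V, b`_i = \sum_j cmul A (f j) b`_j.
  by move=> i; apply: (square_span_decomp (cmul_bilinear A)); rewrite sq_full memvf.
pose C : 'M[U]_n := \matrix_(i, j) ((0 : K), F i j).
pose w : 'cV[U]_n := \matrix_(i, j) ((0 : K), b`_i).
have sum_pair (G : 'I_n -> U) : \sum_j G j = (\sum_j (G j).1, \sum_j (G j).2).
  by rewrite [LHS]surjective_pairing; congr pair; exact: big_morph.
have Cw : C *m w = w.
  apply/matrixP => i k; rewrite !mxE sum_pair [in RHS]bF; congr pair.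
    by rewrite big1 // => j _; rewrite !mxE /= mulr0.
  by apply: eq_bigr => j _; rewrite !mxE /= !scale0r !add0r.
pose d := \det (1%:M - C).
have d_scalar : unitization_scalar d = 1.
  rewrite -det_map_mx -[RHS](det1 K n); congr (\det _).
  apply/matrixP => i j; rewrite !mxE rmorphB /= rmorph_nat.
  by rewrite /unitization_scalar /= subr0.
exists (- d.2) => x; rewrite (coord_vbasis (memvf x)) (bilin_sumr (cmul_bilinear A)).
apply: eq_bigr => j _; rewrite (bilinZr (cmul_bilinear A)).
congr (_ *: _); rewrite (bilinNl (cmul_bilinear A)).
have := congr1 (fun N : 'cV[U]_n => (N j ord0).2) (scale_det_1Bmx_fixed Cw).
rewrite !mxE /= -[d.1]/(unitization_scalar d) d_scalar scale1r scale0r addr0.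
by move/eqP; rewrite addr_eq0 => /eqP/esym.
Qed.

End UnitOfIdempotentAlgebra.

Section SimplePoisson.
Variables (K : fieldType) (V : vectType K) (A : comAlg V) (br : V -> V -> V).
Hypothesis br_simple : simple_lie_algebra br.
Hypothesis br_leibniz : forall x y z,
  br (cmul A x y) z = cmul A x (br y z) + cmul A (br x z) y.

Let br_lie : is_lie_algebra br. Proof. by case: br_simple. Qed.
Let br_bil : bilinear_prod br. Proof. by case: br_lie. Qed.

Lemma square_span_lie_ideal : lie_ideal br (square_span (cmul A)).
Proof.
move=> x; apply: square_span_ind => [|v w|a v|y z].
- by rewrite (bilin0r br_bil) mem0v.
- by rewrite (bilinDr br_bil); apply: memvD.
- by rewrite (bilinZr br_bil); apply: memvZ.
rewrite (lie_anticomm br_lie) br_leibniz memvN.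
by apply: memvD; apply: (mul_in_square_span (cmul_bilinear A)).
Qed.

Lemma unit_central e : (forall x, cmul A e x = x) -> forall x, br e x = 0.
Proof.
move=> eK x; have := br_leibniz e e x; rewrite (cmulC A (br e x)) !eK.
by move=> br_ex; apply: (@addrI _ (br e x)); rewrite addr0 -br_ex.
Qed.

Theorem simple_poisson_cmul_eq0 u v : cmul A u v = 0.
Proof.
have [_ [x0 [y0 nz_xy]] ideals] := br_simple.
have [sq0|sq_full] := ideals _ square_span_lie_ideal.
  by apply/eqP; rewrite -memv0 -sq0 (mul_in_square_span (cmul_bilinear A)).
have [e eK] := square_span_full_unital sq_full.
have line_ideal : lie_ideal br <[e]>%VS.
  move=> x _ /vlineP [k ->].
  by rewrite (bilinZr br_bil) (lie_anticomm br_lie) unit_central // oppr0 scaler0 mem0v.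
have [line0|line_full] := ideals _ line_ideal.
  have e0 : e = 0 by apply/eqP; rewrite -memv0 -line0 memv_line.
  by rewrite -(eK (cmul A u v)) e0 (bilin0l (cmul_bilinear A)).
move: nz_xy; have := memvf x0; have := memvf y0.
rewrite -line_full => /vlineP [k ->] /vlineP [l ->].
by rewrite (bilinZl br_bil) (bilinZr br_bil) unit_central // !scaler0 eqxx.
Qed.

End SimplePoisson.

Theorem mainTheorem13 (R : realType) (V : vectType R[i]) (mul : V -> V -> V) :
  admissible_Poisson mul ->
  simple_lie_algebra (pbracket mul) ->
  forall u v : V, pdot mul u v = 0.
Proof.
move=> [mul_bil mul_adm] br_simple u v.
pose A := ComAlg (pdot_bilinear mul_bil) (@pdotC _ _ mul) (pdotA mul_bil mul_adm).
exact: (simple_poisson_cmul_eq0 (A := A) br_simple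
  (pbracket_pdot_leibniz mul_bil mul_adm)).
Qed.
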